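(* Let $s\ge1$, $\varepsilon\ge0$, let $p,p'$ be Borel probability measures on $\mathbb R^n$ with finite $s$-th moments, let $Q$ be a finite partition of $\mathbb R^n$ into Borel sets, and define $\gamma,\gamma'\in\mathcal D(Q)$ by $\gamma(q):=p(q)$, $\gamma'(q):=p'(q)$. If $\mathcal W_s(p,p')\le\varepsilon$, then $\mathcal T_c(\gamma,\gamma')\le\varepsilon^s$.
   Context: $\mathcal W_s$ is the $s$-Wasserstein distance on $\mathbb R^n$ with respect to the Euclidean norm $\|\cdot\|$: $\mathcal W_s(p,p')^s=\inf_\pi\int\|x-y\|^s\,d\pi(x,y)$ over couplings $\pi$ of $p,p'$. For $q,q'\in Q$, $c(q,q'):=\inf\{\|x-y\|^s:x\in q,y\in q'\}$, and for $\gamma,\gamma'\in\mathcal D(Q)$ (probability distributions on $Q$), $\mathcal T_c(\gamma,\gamma'):=\min_{\nu}\sum_{q,q'\in Q}c(q,q')\nu(q,q')$, the minimum over couplings $\nu$ of $\gamma$ and $\gamma'$. *)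

From HB Require Import structures.
From mathcomp Require Import all_boot all_order all_algebra.
From mathcomp Require Import all_classical all_reals all_analysis.
Import Order.TTheory GRing.Theory Num.Theory.
Import numFieldNormedType.Exports.
Local Open Scope classical_set_scope.
Local Open Scope ring_scope.

Set Implicit Arguments. Unset Strict Implicit. Unset Printing Implicit Defensive.

(* R^n, as row vectors, equipped with its Borel sigma-algebra: the
   sigma-algebra generated by the open sets of the (product = Euclidean)
   topology of 'rV[R]_n. *)
Notation Rn R n := (g_sigma_algebraType (@open 'rV[R]_n)).

Definition enorm (R : realType) (n : nat) (x : 'rV[R]_n) : R :=
  Num.sqrt (\sum_(i < n) (x ord0 i) ^+ 2).

Definition is_coupling (R : realType) (n : nat)
  (p p' : probability (Rn R n) R)
  (pi : probability (Rn R n * Rn R n)%type R) : Prop :=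
  (forall A : set (Rn R n), measurable A -> pi (A `*` setT) = p A) /\
  (forall B : set (Rn R n), measurable B -> pi (setT `*` B) = p' B).

Definition finite_moment (R : realType) (n : nat) (s : R)
  (p : probability (Rn R n) R) : Prop :=
  (\int[p]_x ((enorm (x : 'rV[R]_n)) `^ s)%:E < +oo)%E.

Definition Wasserstein (R : realType) (n : nat) (s : R)
  (p p' : probability (Rn R n) R) : \bar R :=
  poweR (ereal_inf [set (\int[pi]_z
            ((enorm ((z.1 : 'rV[R]_n) - (z.2 : 'rV[R]_n))) `^ s)%:E)%E
          | pi in [set pi | is_coupling p p' pi]]) s^-1.

Definition is_finite_Borel_partition (R : realType) (n k : nat)
  (Q : 'I_k -> set (Rn R n)) : Prop :=
  [/\ (forall i, measurable (Q i)),
      (forall i, Q i !=set0),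
      (forall i j, i != j -> Q i `&` Q j = set0) &
      \bigcup_i Q i = setT].

Definition cell_cost (R : realType) (n : nat) (s : R)
  (q q' : set (Rn R n)) : R :=
  inf [set (enorm ((x : 'rV[R]_n) - (y : 'rV[R]_n))) `^ s
      | x in q & y in q'].

Definition is_disc_coupling (R : realType) (k : nat)
  (g g' : 'I_k -> R) (nu : 'I_k -> 'I_k -> R) : Prop :=
  [/\ (forall i j, 0 <= nu i j),
      (forall i, \sum_(j < k) nu i j = g i) &
      (forall j, \sum_(i < k) nu i j = g' j)].

(* T_c(gamma, gamma') = min over couplings nu of sum c(q,q') nu(q,q')
   (the minimum is attained, so it equals the infimum) *)
Definition Tc (R : realType) (k : nat) (c : 'I_k -> 'I_k -> R)
  (g g' : 'I_k -> R) : R :=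
  inf [set \sum_(i < k) \sum_(j < k) c i j * nu i j
      | nu in [set nu | is_disc_coupling g g' nu]].

Definition cell_distr (R : realType) (n k : nat) (Q : 'I_k -> set (Rn R n))
  (p : probability (Rn R n) R) : 'I_k -> R :=
  fun i => fine (p (Q i)).

From HB Require Import structures.
From mathcomp Require Import all_boot all_order all_algebra.
From mathcomp Require Import all_classical all_reals all_analysis.
Import Order.TTheory GRing.Theory Num.Theory.
Import numFieldNormedType.Exports.
Local Open Scope classical_set_scope.
Local Open Scope ring_scope.

Set Implicit Arguments.
Unset Strict Implicit.
Unset Printing Implicit Defensive.

(* For a coupling pi of p and p', the masses pi (Q i `*` Q j) form a coupling
   of the cell distributions, since the cells partition R^n.  On Q i `*` Q j the
   cost ||x - y||^s is at least c (Q i) (Q j), so the discrete cost of this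
   coupling is the integral of a simple function below the cost, hence at most
   the transport cost of pi.  Taking the infimum over pi bounds T_c by
   W_s(p, p')^s <= eps^s. *)

Lemma bigsetU_ord_bigcup (T : Type) (k : nat) (F : 'I_k -> set T) :
  \big[setU/set0]_(i < k) F i = \bigcup_i F i.
Proof.
rewrite -bigcup_seq; apply: eq_bigcupl; split=> // i _; exact: mem_index_enum.
Qed.

Section step_function.
Context d (T : measurableType d) (R : realType) (I : finType).
Variables (A : I -> set T) (c : I -> R).
Hypotheses (mA : forall i, measurable (A i)) (c0 : forall i, 0 <= c i).

Import HBNNSimple.

Definition step_nnsfun : {nnsfun T >-> R} :=
  \big[add_nnsfun/nnsfun0]_i scale_nnsfun (indic_nnsfun R (mA i)) (c0 i).

Lemma step_nnsfunE x : step_nnsfun x = \sum_i c i * \1_(A i) x.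
Proof. by rewrite /step_nnsfun; elim/big_ind2: _ => [|f a g b <- <-|]. Qed.

Lemma sintegral_step_nnsfun (mu : {measure set T -> \bar R}) :
  sintegral mu step_nnsfun = (\sum_i (c i)%:E * mu (A i))%E.
Proof.
rewrite /step_nnsfun; elim/big_ind2: _ => [|f a g b <- <-|i _].
- exact: sintegral0.
- exact: sintegralD.
- by rewrite sintegralrM sintegral_indic.
Qed.

Lemma step_nnsfun_le (f : T -> \bar R) x :
  trivIset setT A -> (forall i, A i x -> ((c i)%:E <= f x)%E) -> (0 <= f x)%E ->
  ((step_nnsfun x)%:E <= f x)%E.
Proof.
move=> tA cf f0; rewrite step_nnsfunE.
have [[i Ai]|nA] := pselect (exists i, A i x); last first.
  rewrite big1 // => i _.
  by rewrite indicE memNset ?mulr0 // => Ai; apply: nA; exists i.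
rewrite (bigD1 i) //= big1 ?addr0 ?indicE ?mem_set ?mulr1 ?cf // => j /eqP ji.
by rewrite indicE memNset ?mulr0 // => Aj; apply/ji/tA => //; exists x.
Qed.

(* Comparing through the definition of the integral as a supremum over simple
   functions avoids any measurability requirement on f. *)
Lemma step_le_integral (mu : {measure set T -> \bar R}) (f : T -> \bar R) :
  trivIset setT A -> (forall i x, A i x -> ((c i)%:E <= f x)%E) ->
  (forall x, 0 <= f x)%E ->
  (\sum_i (c i)%:E * mu (A i) <= \int[mu]_x f x)%E.
Proof.
move=> tA cf f0; rewrite -sintegral_step_nnsfun ge0_integralTE//.
apply: ereal_sup_ubound; exists step_nnsfun => // x.
by apply: step_nnsfun_le => // i /cf.
Qed.
End step_function.

Lemma trivIset_setX (T1 T2 I J : Type) (F : I -> set T1) (G : J -> set T2) :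
  trivIset setT F -> trivIset setT G ->
  trivIset setT (fun ij : I * J => F ij.1 `*` G ij.2).
Proof.
move=> tF tG [i j] [i' j'] _ _ [z [[Fi Gj] [Fi' Gj']]].
by congr pair; [apply: tF | apply: tG] => //; [exists z.1 | exists z.2].
Qed.

Section product_partition.
Context d1 d2 (T1 : measurableType d1) (T2 : measurableType d2) (R : realType).
Variable mu : {measure set (T1 * T2) -> \bar R}.

Lemma measure_setX_partitionr (A : set T1) (k : nat) (Q : 'I_k -> set T2) :
  measurable A -> (forall j, measurable (Q j)) -> trivIset setT Q ->
  \bigcup_j Q j = setT -> (\sum_j mu (A `*` Q j) = mu (A `*` setT))%E.
Proof.
move=> mA mQ tQ QT; rewrite -QT setX_bigcupr -bigsetU_ord_bigcup.
rewrite measure_bigsetU_ord // => [j|i j _ _ [z [[_ Qi] [_ Qj]]]].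
  exact: measurableX.
by apply: tQ => //; exists z.2.
Qed.

Lemma measure_setX_partitionl (B : set T2) (k : nat) (Q : 'I_k -> set T1) :
  measurable B -> (forall i, measurable (Q i)) -> trivIset setT Q ->
  \bigcup_i Q i = setT -> (\sum_i mu (Q i `*` B) = mu (setT `*` B))%E.
Proof.
move=> mB mQ tQ QT; rewrite -QT setX_bigcupl -bigsetU_ord_bigcup.
rewrite measure_bigsetU_ord // => [i|i j _ _ [z [[Qi _] [Qj _]]]].
  exact: measurableX.
by apply: tQ => //; exists z.1.
Qed.
End product_partition.

Lemma finite_Borel_partition_trivIset (R : realType) (n k : nat)
    (Q : 'I_k -> set (Rn R n)) :
  is_finite_Borel_partition Q -> trivIset setT Q.
Proof.
move=> [_ _ QI _] i j _ _ [x Qijx]; have [//|/QI ij0] := eqVneq i j.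
by move: Qijx; rewrite ij0.
Qed.

Lemma cell_cost_ge0 (R : realType) (n : nat) (s : R) (q q' : set (Rn R n)) :
  0 <= cell_cost s q q'.
Proof.
rewrite /cell_cost; set S := [set _ | _ in q & _ in q'].
have [->|/set0P S0] := eqVneq S set0; first by rewrite inf0.
by apply: lb_le_inf => // _ [x _ [y _ <-]]; exact: powR_ge0.
Qed.

Lemma cell_cost_le (R : realType) (n : nat) (s : R) (q q' : set (Rn R n))
    (x y : Rn R n) :
  q x -> q' y -> cell_cost s q q' <= enorm ((x : 'rV[R]_n) - y) `^ s.
Proof.
move=> qx q'y; apply: ge_inf; last by exists x => //; exists y.
by exists 0 => _ [x' _ [y' _ <-]]; exact: powR_ge0.
Qed.

Lemma Tc_le_disc_coupling (R : realType) (k : nat) (c : 'I_k -> 'I_k -> R)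
    (g g' : 'I_k -> R) (nu : 'I_k -> 'I_k -> R) :
  (forall i j, 0 <= c i j) -> is_disc_coupling g g' nu ->
  Tc c g g' <= \sum_i \sum_j c i j * nu i j.
Proof.
move=> c0 nu_cpl; apply: ge_inf; last by exists nu.
exists 0 => _ [nu' [nu'0 _ _] <-].
by apply: sumr_ge0 => i _; apply: sumr_ge0 => j _; exact: mulr_ge0.
Qed.

Section coupling_on_cells.
Context (R : realType) (n : nat) (p p' : probability (Rn R n) R).
Context (pi : probability (Rn R n * Rn R n)%type R).
Context (k : nat) (Q : 'I_k -> set (Rn R n)).
Hypotheses (QP : is_finite_Borel_partition Q) (pi_cpl : is_coupling p p' pi).

Definition cell_coupling (i j : 'I_k) : R := fine (pi (Q i `*` Q j)).

Lemma is_disc_coupling_cell_coupling :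
  is_disc_coupling (cell_distr Q p) (cell_distr Q p') cell_coupling.
Proof.
have [mQ _ _ QT] := QP; have tQ := finite_Borel_partition_trivIset QP.
have fin_cell i j : pi (Q i `*` Q j) \is a fin_num.
  by apply: fin_num_measure; exact: measurableX.
split => [i j|i|j]; first exact: fine_ge0.
- rewrite sum_fine // measure_setX_partitionr //; congr fine; exact: pi_cpl.1.
- rewrite sum_fine // measure_setX_partitionl //; congr fine; exact: pi_cpl.2.
Qed.

Lemma Tc_cells_le_coupling_cost (s : R) :
  ((Tc (fun i j => cell_cost s (Q i) (Q j)) (cell_distr Q p) (cell_distr Q p'))%:E
    <= \int[pi]_z (enorm ((z.1 : 'rV[R]_n) - z.2) `^ s)%:E)%E.
Proof.
have [mQ _ _ _] := QP; have tQ := finite_Borel_partition_trivIset QP.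
pose c i j := cell_cost s (Q i) (Q j).
have c0 i j : 0 <= c i j by exact: cell_cost_ge0.
have cell_sumE : (\sum_i \sum_j c i j * cell_coupling i j)%:E =
    (\sum_i \sum_j (c i j)%:E * pi (Q i `*` Q j))%E.
  rewrite -sumEFin; apply: eq_bigr => i _; rewrite -sumEFin.
  apply: eq_bigr => j _; rewrite EFinM fineK //.
  by apply: fin_num_measure; exact: measurableX.
apply: (@le_trans _ _ (\sum_i \sum_j c i j * cell_coupling i j)%:E).
  by rewrite lee_fin; exact: Tc_le_disc_coupling is_disc_coupling_cell_coupling.
rewrite cell_sumE pair_bigA /=.
apply: (step_le_integral (A := fun ij => Q ij.1 `*` Q ij.2)
                         (c := fun ij => c ij.1 ij.2)).
- by move=> ij; exact: measurableX.
- by move=> ij; exact: c0.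
- exact: trivIset_setX.
- by move=> ij z [Qz1 Qz2]; rewrite lee_fin cell_cost_le.
- by move=> z; rewrite lee_fin powR_ge0.
Qed.
End coupling_on_cells.

Lemma poweRV_le (R : realType) (x e : \bar R) (r : R) :
  0 < r -> (0 <= x)%E -> (x `^ r^-1 <= e)%E -> (x <= e `^ r)%E.
Proof.
move=> r0 x0 xe; rewrite -[x]poweRe1 // -(mulVf (lt0r_neq0 r0)) poweRrM.
apply: gt0_ler_poweR => //; first exact: ltW.
- by rewrite in_itv /= poweR_ge0 leey.
- by rewrite in_itv /= (le_trans (poweR_ge0 _ _) xe) leey.
Qed.

Theorem lemma2 (R : realType) (n : nat) (s eps : R)
  (p p' : probability (Rn R n) R) (k : nat) (Q : 'I_k -> set (Rn R n)) :
  1 <= s -> 0 <= eps ->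
  finite_moment s p -> finite_moment s p' ->
  is_finite_Borel_partition Q ->
  (Wasserstein s p p' <= eps%:E)%E ->
  Tc (fun i j => cell_cost s (Q i) (Q j)) (cell_distr Q p) (cell_distr Q p')
    <= eps `^ s.
Proof.
move=> s1 _ _ _ QP W.
have s0 : 0 < s := lt_le_trans ltr01 s1.
rewrite -lee_fin -poweR_EFin; apply: le_trans (poweRV_le s0 _ W).
- apply/ereal_infP => _ [pi pi_cpl <-].
  exact: Tc_cells_le_coupling_cost.
- apply/ereal_infP => _ [pi _ <-].
  by apply: integral_ge0 => z _; rewrite lee_fin powR_ge0.
Qed.
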